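(* Let $E$ be a linear subspace of $\mathbb{R}^d$, $\|\cdot\|_c$ and $\|\cdot\|_s$ norms on $\mathbb{R}^d$ such that $x\mapsto\frac12\|x\|_s^2$ is $L$-smooth with respect to $\|\cdot\|_s$, $p_{c,E}(x)=\min_{y\in E}\|x-y\|_c$, $p_{s,E}(x)=\min_{y\in E}\|x-y\|_s$, $\theta>0$, and $$M_E(x)=\min_{y\in\mathbb{R}^d}\left\{\tfrac12p_{c,E}^2(y)+\tfrac1{2\theta}\|x-y\|_s^2\right\}.$$ Then: (1) $M_E$ is convex and $M_E(y)\le M_E(x)+\langle\nabla M_E(x),y-x\rangle+\frac{L}{2\theta}p_{s,E}^2(y-x)$ for all $x,y\in\mathbb{R}^d$. (2) If $\ell_{cs},u_{cs}>0$ satisfy $\ell_{cs}\|\cdot\|_s\le\|\cdot\|_c\le u_{cs}\|\cdot\|_s$, and $\ell_{cm}=\sqrt{1+\theta\ell_{cs}^2}$, $u_{cm}=\sqrt{1+\theta u_{cs}^2}$, then $\ell_{cm}^2M_E(x)\le\frac12p_{c,E}^2(x)\le u_{cm}^2M_E(x)$ for all $x\in\mathbb{R}^d$. (3) $\|\nabla M_E(x)-\nabla M_E(y)\|_{s,*}\le\frac{L}{\theta}p_{s,E}(x-y)$ for all $x,y\in\mathbb{R}^d$, where $\|\cdot\|_{s,*}$ is the dual norm of $\|\cdot\|_s$.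
   Context: A function $f$ is $L$-smooth with respect to a norm $\|\cdot\|$ if it is differentiable and $\|\nabla f(x)-\nabla f(y)\|_*\le L\|x-y\|$ for all $x,y$, where $\|\cdot\|_*$ is the dual norm. *)

From HB Require Import structures.
From mathcomp Require Import all_boot all_order all_algebra.
From mathcomp Require Import all_classical all_reals all_analysis.
Set Implicit Arguments. Unset Strict Implicit. Unset Printing Implicit Defensive.
Import Order.TTheory GRing.Theory Num.Theory.
Import numFieldNormedType.Exports.
Local Open Scope classical_set_scope.
Local Open Scope ring_scope.

Definition is_norm {R : realType} {d : nat} (N : 'rV[R]_d -> R) : Prop :=
  [/\ forall x, 0 <= N x,
      forall x, N x = 0 -> x = 0,
      forall (a : R) x, N (a *: x) = `|a| * N x
    & forall x y, N (x + y) <= N x + N y].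

Definition inner {R : realType} {d : nat} (u v : 'rV[R]_d) : R :=
  \sum_(i < d) u ord0 i * v ord0 i.

Definition dual_norm {R : realType} {d : nat} (N : 'rV[R]_d -> R)
  (g : 'rV[R]_d) : R := sup [set inner g v | v in [set v | N v <= 1]].

Definition grad {R : realType} {d : nat} (f : 'rV[R]_d -> R^o) (x : 'rV[R]_d)
  : 'rV[R]_d := \row_(i < d) ('d f x (delta_mx ord0 i : 'rV[R]_d)).

Definition L_smooth {R : realType} {d : nat} (N : 'rV[R]_d -> R)
  (f : 'rV[R]_d -> R^o) (L : R) : Prop :=
  (forall x, differentiable f x) /\
  (forall x y, dual_norm N (grad f x - grad f y) <= L * N (x - y)).

(* Distance to a subspace E in norm N: min_{y in E} N (x - y) (written as inf;
   the minimum is attained). *)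
Definition dist_sub {R : realType} {d : nat} (N : 'rV[R]_d -> R)
  (E : {vspace 'rV[R]_d}) (x : 'rV[R]_d) : R :=
  inf [set N (x - y) | y in [set y | y \in E]].

Definition ME {R : realType} {d : nat} (Nc Ns : 'rV[R]_d -> R)
  (E : {vspace 'rV[R]_d}) (theta : R) (x : 'rV[R]_d) : R :=
  inf [set (dist_sub Nc E y) ^+ 2 / 2 + (Ns (x - y)) ^+ 2 / (2 * theta)
       | y in [set: 'rV[R]_d]].

From HB Require Import structures.
From mathcomp Require Import all_boot all_order all_algebra.
From mathcomp Require Import all_classical all_reals all_analysis.
From mathcomp Require Import ring lra.
Import Order.TTheory GRing.Theory Num.Theory.
Import numFieldNormedType.Exports.
Local Open Scope classical_set_scope.
Local Open Scope ring_scope.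

(* M_E is the infimal convolution of f = p_{c,E}^2/2 and g = ||.||_s^2/(2 theta).
   Both are convex, so M_E is convex, and by coercivity the infimum defining
   M_E(x) is attained at some y.  Then M_E(x + u) <= f(y) + g(x + u - y), and
   the descent lemma for g (the mean value theorem along a segment) gives an
   upper model of M_E at x, quadratic with constant L/(2 theta) and slope
   G = grad g(x - y).  A convex function lying below such a model at x also lies
   above its linear part, which sandwiches M_E and makes it differentiable with
   gradient G.  M_E is invariant under translation by E, so its gradient is
   orthogonal to E and the upper model can be evaluated at u - e for any e in E:
   this replaces ||u||_s by p_{s,E}(u) in (1).  Adding the upper and lower models
   at x and y gives 2 <g, v> <= <g, x - y> + (L/theta) ||v||_s^2 for
   g = grad M_E(x) - grad M_E(y), and optimizing over the radius of v yields (3).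
   For the lower bound in (2), evaluate the objective at e + (x - e)/(1 + theta l^2)
   for e in E; the upper bound follows from p_{c,E}(x) <= p_{c,E}(y) + u ||x - y||_s
   and Cauchy-Schwarz. *)

Section RealFacts.
Context {R : realType}.
Implicit Types a b c t : R.

Lemma ler_of_small_scale a b c :
  (forall t, 0 < t <= 1 -> a <= b + t * c) -> a <= b.
Proof.
move=> H; apply/ler_addgt0Pr => e e0.
have [c0|c0] := leP c 0.
  apply: (le_trans (H 1 _)); first by rewrite ltr01 lexx.
  by rewrite mul1r lerD2l (le_trans c0) ?ltW.
pose t := Num.min 1 (e / c).
have t0 : 0 < t by rewrite lt_min ltr01 divr_gt0.
apply: (le_trans (H t _)); first by rewrite t0 ge_min lexx.
by rewrite lerD2l -ler_pdivlMr // ge_min lexx orbT.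
Qed.

Lemma sqr_convex a b t : 0 <= t <= 1 ->
  (t * a + (1 - t) * b) ^+ 2 <= t * a ^+ 2 + (1 - t) * b ^+ 2.
Proof.
move=> /andP[t0 t1].
have t1' : 0 <= 1 - t by rewrite subr_ge0.
have := mulr_ge0 (mulr_ge0 t0 t1') (sqr_ge0 (a - b)); nra.
Qed.

Lemma le_of_forall_quadratic (D K P : R) : 0 <= K -> 0 <= P ->
  (forall r, 0 < r -> 2 * r * D <= K * r ^+ 2 + D * P) -> D <= K * P.
Proof.
move=> K0 P0 H; have [D0|D0] := leP D 0; first by rewrite (le_trans D0) ?mulr_ge0.
have [K00|Kp] := eqVneq K 0.
  by have := H (P + 1); rewrite K00 ltr_pwDr // => /(_ isT); nra.
have {}Kp : 0 < K by rewrite lt_neqAle eq_sym Kp.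
set q := D / K; have Dq : D = K * q by rewrite /q mulrC divfK ?gt_eqF.
have q0 : 0 < q by rewrite divr_gt0.
have := H q q0; rewrite Dq => h.
suff : q <= P by rewrite ler_pM2l.
have Kq : 0 < K * q by rewrite mulr_gt0.
by rewrite -(ler_pM2l Kq); nra.
Qed.
End RealFacts.

Section InfImage.
Context {R : realType} {T : Type} (A : set T) (F : T -> R).
Hypothesis F_ge0 : forall z, A z -> 0 <= F z.

Lemma inf_image_le y : A y -> inf [set F z | z in A] <= F y.
Proof.
move=> Ay; apply: ge_inf; last by exists y.
by exists 0 => _ [z Az <-]; exact: F_ge0.
Qed.

Lemma le_inf_image m : A !=set0 -> (forall z, A z -> m <= F z) ->
  m <= inf [set F z | z in A].
Proof.
move=> [y Ay] H; apply: lb_le_inf; first by exists (F y), y.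
by move=> _ [z Az <-]; exact: H.
Qed.

Lemma inf_image_adherent e : A !=set0 -> 0 < e ->
  exists2 y, A y & F y < inf [set F z | z in A] + e.
Proof.
move=> [y0 Ay0] e0.
have [|_ [y Ay <-] H] := @inf_adherent _ [set F z | z in A] e e0; last by exists y.
split; first by exists (F y0), y0.
by exists 0 => _ [z Az <-]; exact: F_ge0.
Qed.
End InfImage.

Lemma lipschitz_continuous_rV {R : realType} {d : nat} (f : 'rV[R]_d -> R) K :
  (forall x y, `|f x - f y| <= K * `|x - y|) -> continuous f.
Proof.
move=> H x; apply/(@cvgrPdist_lt _ _ _ (nbhs x)) => e e0.
have K1 : 0 < `|K| + 1 by rewrite ltr_pwDr.
near=> z; apply: (le_lt_trans (H x z)).
apply: (@le_lt_trans _ _ ((`|K| + 1) * `|x - z|)).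
  by rewrite ler_wpM2r // (le_trans (ler_norm K)) // lerDl.
rewrite -ltr_pdivlMl //; near: z; apply: cvgr_dist_lt => //.
by rewrite mulrC divr_gt0.
Unshelve. all: by end_near. Qed.

Definition is_convex {R : realType} {d : nat} (f : 'rV[R]_d -> R) : Prop :=
  forall a b t, 0 <= t <= 1 -> f (t *: a + (1 - t) *: b) <= t * f a + (1 - t) * f b.

Section Norm.
Context {R : realType} {d : nat} {N : 'rV[R]_d -> R} (hN : is_norm N).
Local Notation V := 'rV[R]_d.
Implicit Types x y : V.

Lemma N_ge0 x : 0 <= N x. Proof. by case: hN. Qed.
Lemma N_eq0 x : N x = 0 -> x = 0. Proof. by case: hN => _ + _ _; apply. Qed.
Lemma NZ a x : N (a *: x) = `|a| * N x. Proof. by case: hN. Qed.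
Lemma ler_ND x y : N (x + y) <= N x + N y. Proof. by case: hN. Qed.

Lemma N0 : N 0 = 0.
Proof. by rewrite -(scale0r (0 : V)) NZ normr0 mul0r. Qed.

Lemma NN x : N (- x) = N x.
Proof. by rewrite -scaleN1r NZ normrN normr1 mul1r. Qed.

Lemma N_distC x y : N (x - y) = N (y - x).
Proof. by rewrite -NN opprB. Qed.

Lemma NZ_nneg a x : 0 <= a -> N (a *: x) = a * N x.
Proof. by move=> a0; rewrite NZ ger0_norm. Qed.

Lemma N_gt0 x : x != 0 -> 0 < N x.
Proof.
move=> x0; rewrite lt_neqAle N_ge0 andbT eq_sym.
by apply: contra_neq x0 => /N_eq0.
Qed.

Lemma ler_N_dist x y : `|N x - N y| <= N (x - y).
Proof.
rewrite ler_norml; apply/andP; split.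
  by have := ler_ND (y - x) x; rewrite subrK N_distC; lra.
by have := ler_ND (x - y) y; rewrite subrK; lra.
Qed.

Lemma N_convex : is_convex N.
Proof.
by move=> x y t /andP[t0 t1]; rewrite -!NZ_nneg ?subr_ge0 //; apply: ler_ND.
Qed.

Lemma N_le_mx_norm : exists2 C, 0 <= C & forall x, N x <= C * `|x|.
Proof.
exists (\sum_(i < d) N (delta_mx ord0 i)).
  by apply: sumr_ge0 => i _; exact: N_ge0.
move=> x; rewrite {1}(row_sum_delta x) mulr_suml.
elim/big_rec2: _ => [|i c u _ Hu]; first by rewrite N0.
apply: (le_trans (ler_ND _ _)); apply: lerD => //.
rewrite NZ mulrC ler_wpM2l ?N_ge0 //.
by rewrite [leRHS]/Num.norm /= mx_normrE; apply/bigmax_geP; right; exists (ord0, i).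
Qed.

Lemma N_continuous : continuous N.
Proof.
have [C _ HC] := N_le_mx_norm.
apply: (@lipschitz_continuous_rV _ _ _ C) => x y.
exact: le_trans (ler_N_dist x y) (HC _).
Qed.

Lemma mx_norm_le_N : exists2 c, 0 < c & forall x, c * `|x| <= N x.
Proof.
set S := [set x : V | `|x| = 1].
have unitS x : x != 0 -> S (`|x|^-1 *: x).
  by move=> x0; rewrite /S /= normrZ normfV normr_id mulVf ?normr_eq0.
have [[y Sy]|S0] := pselect (S !=set0); last first.
  exists 1 => // x; rewrite mul1r.
  have [->|x0] := eqVneq x 0; first by rewrite normr0 N_ge0.
  by exfalso; apply: S0; exists (`|x|^-1 *: x); exact: unitS.
have cS : compact S.
  apply: bounded_closed_compact.
    exists 1; split; first exact: num_real.
    by move=> M M1 x /= ->; rewrite ltW.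
  rewrite (_ : S = Num.norm @^-1` [set 1]) //.
  by apply: preimage_closed; [move=> x _; exact: norm_continuous | exact: closed_eq].
have [c0 /set_mem Sc0 Hc0] :=
  EVT_min_rV (ex_intro _ y Sy) cS (continuous_subspaceT N_continuous).
have c00 : c0 != 0.
  by apply: contraPneq Sc0 => ->; rewrite /S /= normr0 => /eqP; rewrite eq_sym oner_eq0.
exists (N c0); first exact: N_gt0.
move=> x; have [->|x0] := eqVneq x 0; first by rewrite normr0 mulr0 N_ge0.
have := Hc0 _ (mem_set (unitS x x0)).
by rewrite NZ normfV normr_id ler_pdivlMl ?normr_gt0 // mulrC.
Qed.
End Norm.

Section Inner.
Context {R : realType} {d : nat}.
Local Notation V := 'rV[R]_d.
Implicit Types (g h u v : V) (a : R).

Lemma innerC u v : inner u v = inner v u.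
Proof. by apply: eq_bigr => i _; rewrite mulrC. Qed.

Lemma inner_linear g : linear (inner g : V -> R^o).
Proof.
move=> a u v; rewrite /inner /= scaler_sumr -big_split /=.
by apply: eq_bigr => i _; rewrite !mxE mulrDr; congr (_ + _); exact: mulrCA.
Qed.

HB.instance Definition _ g :=
  GRing.isLinear.Build R V R^o _ (inner g) (inner_linear g).

Lemma innerDr g u v : inner g (u + v) = inner g u + inner g v.
Proof. exact: linearD. Qed.

Lemma innerZr g a u : inner g (a *: u) = a * inner g u.
Proof. exact: linearZ. Qed.

Lemma innerNr g u : inner g (- u) = - inner g u.
Proof. exact: linearN. Qed.

Lemma innerBr g u v : inner g (u - v) = inner g u - inner g v.
Proof. exact: linearB. Qed.

Lemma inner0r g : inner g 0 = 0.
Proof. exact: linear0. Qed.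

Lemma innerBl g h u : inner (g - h) u = inner g u - inner h u.
Proof. by rewrite innerC innerBr !(innerC u). Qed.

Lemma innerZl a g u : inner (a *: g) u = a * inner g u.
Proof. by rewrite innerC innerZr innerC. Qed.

Lemma inner_delta g i : inner g (delta_mx ord0 i) = g ord0 i.
Proof.
rewrite /inner (bigD1 i) //= big1 ?addr0; first by rewrite mxE !eqxx mulr1.
by move=> j ji; rewrite mxE (negbTE ji) andbF mulr0.
Qed.

Lemma ler_inner_mx_norm g u : `|inner g u| <= (\sum_i `|g ord0 i|) * `|u|.
Proof.
rewrite mulr_suml; apply: (le_trans (ler_norm_sum _ _ _)).
apply: ler_sum => i _; rewrite normrM ler_wpM2l //.
by rewrite [leRHS]/Num.norm /= mx_normrE; apply/bigmax_geP; right; exists (ord0, i).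
Qed.

Lemma inner_continuous g : continuous (inner g : V -> R^o).
Proof.
apply: (@lipschitz_continuous_rV _ _ _ (\sum_i `|g ord0 i|)) => x y.
by rewrite -innerBr; exact: ler_inner_mx_norm.
Qed.

Lemma diff_grad (f : V -> R^o) z u : 'd f z u = inner (grad f z) u.
Proof.
rewrite {1}(row_sum_delta u) linear_sum; apply: eq_bigr => i _.
by rewrite linearZ /= /grad mxE mulrC.
Qed.

Lemma is_derive_line (f : V -> R^o) (z u : V) t :
  derivable f (t *: u + z) u ->
  is_derive t 1 (fun s : R => f (s *: u + z)) ('D_u f (t *: u + z)).
Proof.
have E : (fun h : R => h^-1 *: (((fun s : R => f (s *: u + z)) \o shift t) (h *: 1)
                                  - f (t *: u + z)))
       = (fun h : R => h^-1 *: ((f \o shift (t *: u + z)) (h *: u) - f (t *: u + z))).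
  by apply: funext => h; rewrite /= scaler1 scalerDl addrA.
by move=> df; apply: DeriveDef; rewrite /derivable /derive E.
Qed.

Lemma quadratic_approx_differentiable (f : V -> R^o) x G C :
  (forall h, `|f (h + x) - f x - inner G h| <= C * `|h| ^+ 2) ->
  differentiable f x /\ grad f x = G.
Proof.
move=> H.
have fo : f \o shift x = cst (f x) + inner G +o_ (0 : V) id.
  apply/eqaddoP => e e0 /=.
  have C1 : 0 < `|C| + 1 by rewrite ltr_pwDr.
  near=> h; rewrite !fctE /= opprD addrA.
  apply: (le_trans (H h)); rewrite expr2 mulrA ler_wpM2r //.
  apply: (@le_trans _ _ ((`|C| + 1) * `|h|)).
    by rewrite ler_wpM2r // (le_trans (ler_norm C)) // lerDl.
  rewrite -ler_pdivlMl // mulrC; near: h; apply: (@nbhs0_le R V).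
  by rewrite divr_gt0.
have dE := diff_unique (inner_continuous G) fo.
have df : differentiable f x.
  by apply/diff_locallyP; rewrite dE; split; [exact: inner_continuous | exact: fo].
split => //; apply/rowP => i.
by rewrite /grad mxE dE; exact: inner_delta.
Unshelve. all: by end_near. Qed.
End Inner.

Section Dual.
Context {R : realType} {d : nat} {N : 'rV[R]_d -> R} (hN : is_norm N).
Local Notation V := 'rV[R]_d.
Implicit Types (g v : V).

Lemma dual_norm_has_sup g : has_sup [set inner g v | v in [set v | N v <= 1]].
Proof.
split; first by exists (inner g 0), 0 => //=; rewrite N0.
have [c c0 Hc] := mx_norm_le_N hN.
exists ((\sum_i `|g ord0 i|) / c) => _ [v /= Nv <-].
apply: (le_trans (ler_norm _)); apply: (le_trans (ler_inner_mx_norm _ _)).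
rewrite ler_pdivlMr // -mulrA ler_piMr ?sumr_ge0 //.
by rewrite mulrC (le_trans (Hc v)).
Qed.

Lemma inner_le_dual_norm g v : inner g v <= dual_norm N g * N v.
Proof.
have [->|v0] := eqVneq v 0; first by rewrite inner0r N0 // mulr0.
have Nv := N_gt0 hN _ v0.
have : inner g ((N v)^-1 *: v) <= dual_norm N g.
  apply: sup_upper_bound; first exact: dual_norm_has_sup.
  by exists ((N v)^-1 *: v) => //=; rewrite NZ_nneg ?invr_ge0 ?N_ge0 // mulVf ?gt_eqF.
by rewrite innerZr -ler_pdivlMl ?invr_gt0 // invrK mulrC.
Qed.

Lemma dual_norm_ge0 g : 0 <= dual_norm N g.
Proof.
apply: (le_trans _ (sup_upper_bound (dual_norm_has_sup g) _)).
  by rewrite -(inner0r g).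
by exists 0; rewrite //= N0.
Qed.

Lemma dual_norm_le_ub g m :
  (forall v, N v <= 1 -> inner g v <= m) -> dual_norm N g <= m.
Proof.
move=> H; apply: ge_sup; first by exists (inner g 0), 0 => //=; rewrite N0.
by move=> _ [v /= Nv <-]; exact: H.
Qed.

Lemma L_smooth_descent {f : V -> R^o} {L : R} : L_smooth N f L ->
  forall z u, f (z + u) <= f z + inner (grad f z) u + L / 2 * N u ^+ 2.
Proof.
move=> [df Lg] z u.
pose p : {poly R} := inner (grad f z) u *: 'X + (L / 2 * N u ^+ 2) *: 'X^2.
(* phi' (s) = <grad f (s u + z) - grad f z, u> - L s N(u)^2 <= 0 by L-smoothness *)
pose phi s := f (s *: u + z) - p.[s].
have dphi (s : R) : is_derive s (1 : R) phi ('D_u f (s *: u + z) - p^`().[s]).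
  apply: (is_deriveB (f := fun s : R => f (s *: u + z)) (g := horner p)).
  by apply: is_derive_line; exact: diff_derivable.
have phi_cont : continuous phi.
  by move=> s; apply/differentiable_continuous/derivable1_diffP; exact: ex_derive.
have [c c01 phiE] := MVT ltr01 (fun s _ => dphi s) (continuous_subspaceT phi_cont).
have pE s : p.[s] = inner (grad f z) u * s + L / 2 * N u ^+ 2 * s ^+ 2.
  by rewrite /p hornerD !hornerZ hornerX hornerXn.
have dpE s : p^`().[s] = inner (grad f z) u + L * s * N u ^+ 2.
  rewrite /p derivD !derivZ derivX derivXn hornerD !hornerZ hornerMn hornerX hornerC.
  by rewrite mulr1 /=; congr (_ + _); rewrite mulr2n; field.
have phi0 : phi 0 = f z by rewrite /phi pE scale0r add0r expr0n /= !mulr0 addr0 subr0.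
have phi1 : phi 1 = f (z + u) - (inner (grad f z) u + L / 2 * N u ^+ 2).
  by rewrite /phi pE scale1r expr1n !mulr1 [u + z]addrC.
suff : phi 1 <= phi 0 by rewrite phi0 phi1; lra.
rewrite -subr_le0 phiE subr0 mulr1 subr_le0 deriveE // diff_grad dpE.
rewrite -lerBlDl -innerBl.
have c0 : 0 <= c by move: c01; rewrite in_itv => /andP[/ltW].
apply: (le_trans (inner_le_dual_norm _ _)); rewrite expr2 mulrA ler_wpM2r ?N_ge0 //.
by apply: (le_trans (Lg _ _)); rewrite addrK NZ_nneg // mulrA.
Qed.

Lemma L_smooth_nonneg {f : V -> R^o} {L : R} :
  L_smooth N f L -> 0 <= L \/ forall v : V, v = 0.
Proof.
move=> [_ Lg]; have [[v v0]|V0] := pselect (exists v : V, v != 0); last first.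
  by right => v; apply/eqP; apply: contra_notT V0 => v0; exists v.
left; have := le_trans (dual_norm_ge0 _) (Lg v 0).
by rewrite subr0 pmulr_lge0 // (N_gt0 hN _ v0).
Qed.
End Dual.

Section Convex.
Context {R : realType} {d : nat}.
Local Notation V := 'rV[R]_d.

Lemma is_convex_convex_function (f : V -> R) :
  is_convex f -> convex_function [set: convex_lmodType V] (f : V -> R^o).
Proof. by move=> H t x y _ _; apply: H; rewrite ge0 le1. Qed.

Lemma convex_sqr_half (q : V -> R) : (forall x, 0 <= q x) -> is_convex q ->
  is_convex (fun x => q x ^+ 2 / 2).
Proof.
move=> q0 qc a b t t01; have /andP[t0 t1] := t01.
have t1' : 0 <= 1 - t by rewrite subr_ge0.
have : q (t *: a + (1 - t) *: b) ^+ 2 <= (t * q a + (1 - t) * q b) ^+ 2.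
  by rewrite ler_sqr ?nnegrE ?q0 ?addr_ge0 ?mulr_ge0 //; exact: qc.
have := sqr_convex (q a) (q b) _ t01; lra.
Qed.

Lemma convex_lower_model {m : V -> R} {N} (hN : is_norm N) {x G : V} {K : R} :
  is_convex m -> (forall u, m (x + u) <= m x + inner G u + K * N u ^+ 2) ->
  forall u, m x + inner G u <= m (x + u).
Proof.
(* Convexity at the midpoint x of x + t u and x - t u, with the upper model at
   -t u, bounds m (x + t u) from below; convexity on [x, x + u] then gives the
   claim up to an error t K N(u)^2. *)
move=> mc up u; apply: (@ler_of_small_scale _ _ _ (K * N u ^+ 2)) => t /andP[t0 t1].
have t01 : 0 <= t <= 1 by rewrite ltW.
have half01 : 0 <= (2^-1 : R) <= 1 by apply/andP; split; lra.
have H1 := mc (x + u) x t t01.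
have H2 := mc (x + t *: u) (x - t *: u) _ half01.
have H3 := up (- (t *: u)).
rewrite (_ : t *: (x + u) + (1 - t) *: x = x + t *: u) in H1; last first.
  by apply/rowP => i; rewrite !mxE; ring.
rewrite (_ : 2^-1 *: (x + t *: u) + (1 - 2^-1) *: (x - t *: u) = x) in H2; last first.
  by apply/rowP => i; rewrite !mxE; field.
rewrite innerNr innerZr (NN hN) (NZ_nneg hN _ _ (ltW t0)) in H3.
rewrite -(ler_pM2l t0); nra.
Qed.

Lemma two_sided_models_gap {f : V -> R} {N} (hN : is_norm N) {x y Gx Gy : V} {K : R} :
  (forall u, f x + inner Gx u <= f (x + u)) ->
  (forall u, f (x + u) <= f x + inner Gx u + K * N u ^+ 2) ->
  (forall u, f y + inner Gy u <= f (y + u)) ->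
  (forall u, f (y + u) <= f y + inner Gy u + K * N u ^+ 2) ->
  forall v, 2 * inner (Gx - Gy) v <= inner (Gx - Gy) (x - y) + 2 * K * N v ^+ 2.
Proof.
move=> lox upx loy upy v.
have A1 := lox (y + v - x); have A2 := upy v.
have B1 := loy (x - v - y); have B2 := upx (- v).
rewrite [x + _]addrC subrK in A1; rewrite [y + _]addrC subrK in B1.
rewrite (NN hN) in B2.
rewrite ?innerBl ?innerBr ?innerDr ?innerNr in A1 B1 B2 *; lra.
Qed.
End Convex.

Section DistSub.
Context {R : realType} {d : nat} {N : 'rV[R]_d -> R} (hN : is_norm N).
Context (E : {vspace 'rV[R]_d}).
Local Notation V := 'rV[R]_d.
Local Notation p := (dist_sub N E).
Implicit Types x y : V.

Let E_nonempty : [set e : V | e \in E] !=set0.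
Proof. by exists 0; rewrite /= mem0v. Qed.

Lemma dist_sub_ge0 x : 0 <= p x.
Proof. by apply: (le_inf_image _ (fun e => N (x - e))) => // e _; exact: N_ge0. Qed.

Lemma dist_sub_le x e : e \in E -> p x <= N (x - e).
Proof. by apply: (inf_image_le _ (fun e => N (x - e))) => z _; exact: N_ge0. Qed.

Lemma le_dist_sub x m : (forall e, e \in E -> m <= N (x - e)) -> m <= p x.
Proof. by move=> H; apply: (le_inf_image _ (fun e => N (x - e))) => // z /H. Qed.

Lemma dist_sub_adherent x r : 0 < r -> exists2 e, e \in E & N (x - e) < p x + r.
Proof.
move=> r0; apply: (inf_image_adherent _ (fun e => N (x - e))) => // z _.
exact: N_ge0.
Qed.

Lemma dist_sub0 : p 0 = 0.
Proof.
apply/eqP; rewrite eq_le dist_sub_ge0 andbT.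
by apply: le_trans (dist_sub_le 0 _ (mem0v E)) _; rewrite subr0 N0.
Qed.

Lemma dist_sub_lipschitz x y : p x <= p y + N (x - y).
Proof.
rewrite -lerBlDr; apply: le_dist_sub => e eE; rewrite lerBlDr.
apply: (le_trans (dist_sub_le x _ eE)).
by have := ler_ND hN (x - y) (y - e); rewrite addrA subrK [N _ + _]addrC.
Qed.

Lemma dist_subD x e : e \in E -> p (x + e) = p x.
Proof.
have le_shift x' e' : e' \in E -> p (x' + e') <= p x'.
  move=> e'E; apply: le_dist_sub => e'' e''E.
  apply: le_trans (dist_sub_le _ (e'' + e') _) _; first by rewrite memvD.
  by rewrite opprD addrACA subrr addr0.
move=> eE; apply/eqP; rewrite eq_le le_shift //=.
by rewrite -{1}(addrK e x) le_shift ?memvN.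
Qed.

Lemma dist_sub_convex : is_convex p.
Proof.
move=> x y t /andP[t0 t1]; apply/ler_addgt0Pr => r r0.
have [e1 e1E H1] := dist_sub_adherent x _ r0.
have [e2 e2E H2] := dist_sub_adherent y _ r0.
have t1' : 0 <= 1 - t by rewrite subr_ge0.
apply: (le_trans (dist_sub_le _ (t *: e1 + (1 - t) *: e2) _)).
  by rewrite memvD // memvZ.
rewrite (_ : _ - _ = t *: (x - e1) + (1 - t) *: (y - e2)); last first.
  by apply/rowP => i; rewrite !mxE; ring.
apply: (le_trans (ler_ND hN _ _)); rewrite !NZ_nneg //.
have : t * N (x - e1) <= t * (p x + r) by rewrite ler_wpM2l // ltW.
have : (1 - t) * N (y - e2) <= (1 - t) * (p y + r) by rewrite ler_wpM2l // ltW.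
nra.
Qed.

Lemma dist_sub_continuous : continuous p.
Proof.
have [C _ HC] := N_le_mx_norm hN.
apply: (@lipschitz_continuous_rV _ _ _ C) => x y.
have := dist_sub_lipschitz x y; have := dist_sub_lipschitz y x; have := HC (x - y).
by rewrite (N_distC hN y x) ler_norml => *; apply/andP; split; lra.
Qed.

Lemma le_dist_sub_scaled x a K : 0 <= K ->
  (forall e, e \in E -> a <= K * N (x - e)) -> a <= K * p x.
Proof.
move=> K0 H; have [K00|Kp] := eqVneq K 0.
  by move: (H 0 (mem0v E)); rewrite K00 !mul0r.
have {}Kp : 0 < K by rewrite lt_def Kp.
rewrite mulrC -ler_pdivrMr //; apply: le_dist_sub => e /H.
by rewrite ler_pdivrMr // mulrC.
Qed.

Lemma le_dist_sub_sqr x a K : 0 <= K ->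
  (forall e, e \in E -> a <= K * N (x - e) ^+ 2) -> a <= K * p x ^+ 2.
Proof.
move=> K0 H; have [a0|a0] := leP a 0.
  by rewrite (le_trans a0) // mulr_ge0 ?sqr_ge0.
have Kp : 0 < K.
  rewrite lt_def K0 andbT; apply: contraTneq a0 => K00.
  by rewrite -leNgt (le_trans (H 0 (mem0v E))) // K00 mul0r.
have aK0 : 0 <= a / K by rewrite divr_ge0 ?ltW.
rewrite mulrC -ler_pdivrMr // -(sqr_sqrtr aK0).
rewrite ler_sqr ?nnegrE ?sqrtr_ge0 ?dist_sub_ge0 //.
apply: le_dist_sub => e eE; rewrite -ler_sqr ?nnegrE ?sqrtr_ge0 ?N_ge0 //.
by rewrite sqr_sqrtr // ler_pdivrMr // mulrC H.
Qed.

Lemma dual_norm_le_dist_sub (g z : V) (K : R) :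
  0 <= K -> (forall e, e \in E -> inner g e = 0) ->
  (forall v, 2 * inner g v <= inner g z + 2 * K * N v ^+ 2) ->
  dual_norm N g <= 2 * K * p z.
Proof.
move=> K0 gE gap.
have gz : inner g z <= dual_norm N g * p z.
  apply: le_dist_sub_scaled => [|e eE]; first exact: dual_norm_ge0.
  by rewrite -[inner g z]subr0 -(gE e eE) -innerBr inner_le_dual_norm.
apply: le_of_forall_quadratic => [||r r0]; rewrite ?mulr_ge0 ?dist_sub_ge0 //.
suff : 2 * r * dual_norm N g <= 2 * K * r ^+ 2 + inner g z by lra.
rewrite mulrC -ler_pdivlMr ?mulr_gt0 //.
apply: (dual_norm_le_ub hN) => v Nv; rewrite ler_pdivlMr ?mulr_gt0 //.
have := gap (r *: v); rewrite innerZr (NZ_nneg hN _ _ (ltW r0)) exprMn.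
have : 0 <= K * r ^+ 2 * (1 - N v ^+ 2).
  apply: mulr_ge0; first by rewrite mulr_ge0 ?sqr_ge0.
  by rewrite subr_ge0 expr_le1 ?(N_ge0 hN).
nra.
Qed.
End DistSub.

Lemma continuous_sqr_div {R : realType} {d : nat} (q : 'rV[R]_d -> R) k :
  continuous q -> continuous (fun y => q y ^+ 2 / k).
Proof.
move=> cq y; apply: (continuous_comp (g := fun r : R => r ^+ 2 / k) (cq y)).
by apply: cvgMr_tmp; exact: exprn_continuous.
Qed.

Section MoreauEnvelope.
Context {R : realType} {d : nat} {Nc Ns : 'rV[R]_d -> R}.
Hypotheses (hNc : is_norm Nc) (hNs : is_norm Ns).
Context (E : {vspace 'rV[R]_d}) {theta : R} (theta_gt0 : 0 < theta).
Local Notation V := 'rV[R]_d.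
Local Notation M := (ME Nc Ns E theta).
Local Notation p := (dist_sub Nc E).
Implicit Types x y : V.

Definition ME_objective x y : R := p y ^+ 2 / 2 + Ns (x - y) ^+ 2 / (2 * theta).

Lemma ME_objective_ge0 x y : 0 <= ME_objective x y.
Proof. by rewrite addr_ge0 // divr_ge0 ?sqr_ge0 // mulr_ge0 // ltW. Qed.

Lemma ME_le_obj x y : M x <= ME_objective x y.
Proof. by apply: (inf_image_le _ (ME_objective x)) => // z _; exact: ME_objective_ge0. Qed.

Lemma le_ME x m : (forall y, m <= ME_objective x y) -> m <= M x.
Proof. by move=> H; apply: (le_inf_image _ (ME_objective x)) => //; exists 0. Qed.

Lemma ME_objective_continuous x : continuous (ME_objective x).
Proof.
have cs : continuous (fun y => Ns (x - y)).
  move=> y; apply: continuous_comp; last exact: N_continuous.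
  exact: (continuousB (@cst_continuous _ _ _ _)).
have c1 := continuous_sqr_div _ 2 (dist_sub_continuous hNc E).
have c2 := continuous_sqr_div _ (2 * theta) cs.
by move=> y; exact: (continuousD (c1 y) (c2 y)).
Qed.

Lemma ME_attained x : exists y, M x = ME_objective x y.
Proof.
have [c c0 Hc] := mx_norm_le_N hNs.
pose r := Num.sqrt (2 * theta * ME_objective x x) / c.
pose B := [set y : V | `|x - y| <= r].
have cB : compact B.
  apply: bounded_closed_compact; last exact: closed_closed_ball_.
  exists (`|x| + r); split; first exact: num_real.
  move=> K xrK y /= xyr; apply: (le_trans _ (ltW xrK)).
  by rewrite -[y](subKr x) (le_trans (ler_normB _ _)) // lerD2l.
have Bx : B x by rewrite /B /= subrr normr0 divr_ge0 ?sqrtr_ge0 ?ltW.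
have [y0 /set_mem By0 miny0] :=
  EVT_min_rV (ex_intro _ x Bx) cB (continuous_subspaceT (ME_objective_continuous x)).
exists y0; apply/eqP; rewrite eq_le ME_le_obj /=; apply: le_ME => y.
have [/mem_set/miny0 //|nBy] := pselect (B y).
apply: (le_trans (miny0 _ (mem_set Bx))).
have far : 2 * theta * ME_objective x x <= Ns (x - y) ^+ 2.
  have ltr : r < `|x - y| by rewrite ltNge; apply/negP.
  have F0 : 0 <= 2 * theta * ME_objective x x by rewrite !mulr_ge0 ?ME_objective_ge0 ?ltW.
  rewrite -(sqr_sqrtr F0) ler_sqr ?nnegrE ?sqrtr_ge0 ?N_ge0 //.
  by apply: le_trans (Hc _); rewrite -ler_pdivrMl // [_^-1 * _]mulrC ltW.
have far' : ME_objective x x <= Ns (x - y) ^+ 2 / (2 * theta).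
  by rewrite ler_pdivlMr ?mulr_gt0 // mulrC.
by apply: le_trans far' _; rewrite /ME_objective lerDr divr_ge0 ?sqr_ge0.
Qed.

Lemma ME_convex : is_convex M.
Proof.
move=> x x' t t01; have /andP[t0 t1] := t01.
have [y ->] := ME_attained x; have [y' ->] := ME_attained x'.
apply: (le_trans (ME_le_obj _ (t *: y + (1 - t) *: y'))).
have cf := convex_sqr_half _ (dist_sub_ge0 hNc E) (dist_sub_convex hNc E) y y' _ t01.
have cg := convex_sqr_half _ (N_ge0 hNs) (N_convex hNs) (x - y) (x' - y') _ t01.
rewrite /ME_objective (_ : _ - _ = t *: (x - y) + (1 - t) *: (x' - y')); last first.
  by apply/rowP => i; rewrite !mxE; ring.
have it0 : 0 <= theta^-1 by rewrite invr_ge0 ltW.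
rewrite !invfM !mulrA; have := ler_wpM2r it0 cg; nra.
Qed.

Lemma ME_translate x e : e \in E -> M (x + e) = M x.
Proof.
have le_shift x' e' : e' \in E -> M (x' + e') <= M x'.
  move=> e'E; apply: le_ME => y; apply: (le_trans (ME_le_obj _ (y + e'))).
  by rewrite /ME_objective dist_subD // opprD addrACA subrr addr0.
move=> eE; apply/eqP; rewrite eq_le le_shift //=.
by rewrite -{1}(addrK e x) le_shift ?memvN.
Qed.

Lemma dist_sqr_le_ME u : (forall x, Nc x <= u * Ns x) ->
  forall x, p x ^+ 2 / 2 <= (1 + theta * u ^+ 2) * M x.
Proof.
move=> Hu x.
have c0 : 0 < 1 + theta * u ^+ 2 by rewrite ltr_pwDl // mulr_ge0 ?sqr_ge0 ?ltW.
rewrite -ler_pdivrMl //; apply: le_ME => // y; rewrite ler_pdivrMl // /ME_objective.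
have := dist_sub_lipschitz hNc E x y; have := Hu (x - y).
have := dist_sub_ge0 hNc E x; have := dist_sub_ge0 hNc E y; have := N_ge0 hNs (x - y).
move: (p x) (p y) (Ns (x - y)) => P a b b0 a0 P0 hu hP.
have {hu hP} hP : P <= a + u * b by lra.
have {}hP : P ^+ 2 <= (a + u * b) ^+ 2.
  by rewrite ler_sqr ?nnegrE // (le_trans P0 hP).
pose q := b / theta; have bq : b = theta * q by rewrite /q mulrC divfK ?gt_eqF.
rewrite bq in hP *.
have -> : (theta * q) ^+ 2 / (2 * theta) = theta * q ^+ 2 / 2 by field; rewrite gt_eqF.
have := mulr_ge0 (ltW theta_gt0) (sqr_ge0 (q - u * a)); nra.
Qed.

Lemma ME_le_dist_sqr l : 0 < l -> (forall x, l * Ns x <= Nc x) ->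
  forall x, (1 + theta * l ^+ 2) * M x <= p x ^+ 2 / 2.
Proof.
move=> l0 Hl x; set s := theta * l ^+ 2.
have s0 : 0 < s by rewrite mulr_gt0 // exprn_gt0.
have c0 : 0 < 1 + s by rewrite addr_gt0.
pose t := (1 + s)^-1.
have t0 : 0 <= t by rewrite invr_ge0 ltW.
have t1 : 0 <= 1 - t by rewrite subr_ge0 invf_le1 // lerDl ltW.
rewrite mulrC -ler_pdivlMr // (_ : _ / (1 + s) = (2 * (1 + s))^-1 * p x ^+ 2); last first.
  by field; rewrite gt_eqF.
apply: (le_dist_sub_sqr hNc) => [|e eE]; first by rewrite invr_ge0 mulr_ge0 ?ltW.
pose y := e + t *: (x - e).
apply: le_trans (ME_le_obj x y) _; rewrite /ME_objective.
have ha : p y <= t * Nc (x - e).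
  rewrite -(NZ_nneg hNc _ _ t0); apply: le_trans (dist_sub_le hNc E y e eE) _.
  by rewrite /y [e + _]addrC addrK.
have hb : l * Ns (x - y) <= (1 - t) * Nc (x - e).
  rewrite -(NZ_nneg hNc _ _ t1) (_ : x - y = (1 - t) *: (x - e)) ?Hl //.
  by apply/rowP => i; rewrite !mxE; ring.
have a0 := dist_sub_ge0 hNc E y; have b0 := N_ge0 hNs (x - y).
have w0 := N_ge0 hNc (x - e).
move: (p y) (Ns (x - y)) (Nc (x - e)) ha hb a0 b0 w0 => a b w ha hb a0 b0 w0.
have {}ha : a ^+ 2 <= (t * w) ^+ 2 by rewrite ler_sqr ?nnegrE ?mulr_ge0.
have {}hb : (l * b) ^+ 2 <= ((1 - t) * w) ^+ 2.
  by rewrite ler_sqr ?nnegrE ?(mulr_ge0 (ltW l0) b0) ?mulr_ge0.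
rewrite (_ : b ^+ 2 / (2 * theta) = (l * b) ^+ 2 / (2 * s)); last first.
  by rewrite /s; field; rewrite !gt_eqF.
rewrite (_ : _ * w ^+ 2 = (t * w) ^+ 2 / 2 + ((1 - t) * w) ^+ 2 / (2 * s)); last first.
  by rewrite /t; field; rewrite !gt_eqF.
by apply: lerD; rewrite ler_pM2r // invr_gt0 ?mulr_gt0.
Qed.
End MoreauEnvelope.

Section MoreauGradient.
Context {R : realType} {d : nat} {Nc Ns : 'rV[R]_d -> R}.
Hypotheses (hNc : is_norm Nc) (hNs : is_norm Ns).
Context (E : {vspace 'rV[R]_d}) {theta : R} (theta_gt0 : 0 < theta) {L : R}.
Hypothesis hL : L_smooth Ns (fun x => Ns x ^+ 2 / 2) L.
Local Notation V := 'rV[R]_d.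
Local Notation M := (ME Nc Ns E theta).
Local Notation K := (L / (2 * theta)).
Implicit Types x y u : V.

Lemma ME_quad_upper x :
  exists G, forall u, M (x + u) <= M x + inner G u + K * Ns u ^+ 2.
Proof.
have [y Mxy] := ME_attained hNc hNs E theta_gt0 x.
exists (theta^-1 *: grad (fun x => Ns x ^+ 2 / 2) (x - y)) => u.
apply: (le_trans (ME_le_obj E theta_gt0 (x + u) y)).
have := L_smooth_descent hNs hL (x - y) u.
rewrite Mxy /ME_objective innerZl (addrAC x u) invfM !mulrA.
have it0 : 0 < theta^-1 by rewrite invr_gt0.
move=> /(ler_wpM2r (ltW it0)); rewrite !mulrDl; lra.
Qed.

Lemma ME_grad_model x :
  [/\ differentiable (M : V -> R^o) x,
      forall u, M x + inner (grad M x) u <= M (x + u) &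
      forall u, M (x + u) <= M x + inner (grad M x) u + K * Ns u ^+ 2].
Proof.
have [G up] := ME_quad_upper x.
have lo := convex_lower_model hNs (ME_convex hNc hNs E theta_gt0) up.
have [C C0 HC] := N_le_mx_norm hNs.
have [dM ->] : differentiable (M : V -> R^o) x /\ grad M x = G.
  apply: (@quadratic_approx_differentiable _ _ _ _ _ (`|K| * C ^+ 2)) => h.
  have Kb : K * Ns h ^+ 2 <= `|K| * C ^+ 2 * `|h| ^+ 2.
    apply: (le_trans (ler_wpM2r (sqr_ge0 _) (ler_norm K))).
    by rewrite -mulrA ler_wpM2l // -exprMn ler_sqr ?nnegrE ?N_ge0 ?mulr_ge0.
  rewrite [h + x]addrC; have := lo h; have := up h.
  by move=> *; rewrite ger0_norm; lra.
by split.
Qed.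

Lemma ME_grad_orthogonal x e : e \in E -> inner (grad M x) e = 0.
Proof.
have [_ lo _] := ME_grad_model x.
move=> eE; have := lo e; have := lo (- e).
rewrite !ME_translate ?memvN // innerNr; lra.
Qed.

Lemma ME_descent x y :
  M y <= M x + inner (grad M x) (y - x) + K * dist_sub Ns E (y - x) ^+ 2.
Proof.
have [_ _ up] := ME_grad_model x.
have [L0|V0] := L_smooth_nonneg hNs hL; last first.
  by rewrite (V0 y) (V0 x) subrr inner0r dist_sub0 // expr0n mulr0 !addr0.
have K0 : 0 <= K by rewrite divr_ge0 // mulr_ge0 // ltW.
rewrite -lerBlDl; apply: (le_dist_sub_sqr hNs) => // e eE.
have := up (y - x - e).
rewrite [inner _ (y - x - e)]innerBr (ME_grad_orthogonal x e eE) subr0.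
rewrite (_ : x + (y - x - e) = y + - e) ?ME_translate ?memvN //; first lra.
by rewrite addrCA addrA subrK.
Qed.

Lemma ME_grad_lipschitz x y :
  dual_norm Ns (grad M x - grad M y) <= L / theta * dist_sub Ns E (x - y).
Proof.
have [_ lox upx] := ME_grad_model x; have [_ loy upy] := ME_grad_model y.
have ox := ME_grad_orthogonal x; have oy := ME_grad_orthogonal y.
(* Abstracting the gradients keeps unification from unfolding [grad M]. *)
move: (grad M x) (grad M y) lox upx loy upy ox oy => Gx Gy lox upx loy upy ox oy.
have [L0|V0] := L_smooth_nonneg hNs hL; last first.
  apply: (dual_norm_le_ub hNs) => v _.
  by rewrite (V0 v) inner0r (V0 (x - y)) dist_sub0 // mulr0.
rewrite (_ : L / theta = 2 * K); last by field; rewrite gt_eqF.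
apply: (dual_norm_le_dist_sub hNs) => [|e eE|].
- by rewrite divr_ge0 // mulr_ge0 // ltW.
- by rewrite innerBl ox // oy // subrr.
- exact: (two_sided_models_gap hNs lox upx loy upy : forall v, _).
Qed.
End MoreauGradient.

Theorem proposition2 (R : realType) (d : nat) (E : {vspace 'rV[R]_d})
  (Nc Ns : 'rV[R]_d -> R) (L theta : R) :
  is_norm Nc -> is_norm Ns ->
  L_smooth Ns (fun x => (Ns x) ^+ 2 / 2) L ->
  0 < theta ->
  let M := ME Nc Ns E theta in
  (* (1) *)
  ((forall x, differentiable (M : 'rV[R]_d -> R^o) x) /\
   convex_function [set: convex_lmodType 'rV[R]_d] M /\
   (forall x y, M y <= M x + inner (grad M x) (y - x)
                       + L / (2 * theta) * (dist_sub Ns E (y - x)) ^+ 2)) /\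
  (* (2) *)
  (forall lcs ucs : R, 0 < lcs -> 0 < ucs ->
     (forall x, lcs * Ns x <= Nc x /\ Nc x <= ucs * Ns x) ->
     let lcm := Num.sqrt (1 + theta * lcs ^+ 2) in
     let ucm := Num.sqrt (1 + theta * ucs ^+ 2) in
     forall x, lcm ^+ 2 * M x <= (dist_sub Nc E x) ^+ 2 / 2 /\
               (dist_sub Nc E x) ^+ 2 / 2 <= ucm ^+ 2 * M x) /\
  (* (3) *)
  (forall x y, dual_norm Ns (grad M x - grad M y)
                 <= L / theta * dist_sub Ns E (x - y)).
Proof.
move=> hNc hNs hL theta_gt0 M; split; [split; [|split] | split].
- by move=> x; have [] := ME_grad_model hNc hNs E theta_gt0 hL x.
- exact/is_convex_convex_function/(ME_convex hNc hNs E theta_gt0).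
- by move=> x y; apply: ME_descent.
- move=> l u l0 _ Hlu lcm ucm x.
  have c0 a : 0 <= 1 + theta * a ^+ 2 by rewrite addr_ge0 // mulr_ge0 ?sqr_ge0 // ltW.
  rewrite !sqr_sqrtr //; split.
    by apply: ME_le_dist_sqr => // y; case: (Hlu y).
  by apply: dist_sqr_le_ME => // y; case: (Hlu y).
- by move=> x y; apply: ME_grad_lipschitz.
Qed.
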